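(* (Convolution lemma.) Let $x_0,\dots,x_q$ be complex numbers (repetitions allowed), $q\ge1$, let $0\le j\le q-1$, and let $\beta>0$. Then $$\int_0^\beta e^{-\tau[x_{j+1},\ldots,x_q]}\,e^{-(\beta-\tau)[x_0,\ldots,x_j]}\,\mathrm{d}\tau=-e^{-\beta[x_0,\ldots,x_q]}.$$
   Context: For $t\in\mathbb{R}$ and numbers $y_0,\dots,y_p$ (repetitions allowed), $e^{t[y_0,\ldots,y_p]}$ denotes the divided difference of $f(x)=e^{tx}$ at $y_0,\dots,y_p$, defined by $f[y_0,\ldots,y_p]=\frac{1}{2\pi i}\oint_\Gamma\frac{f(x)}{\prod_{i=0}^p(x-y_i)}\,\mathrm{d}x$ with $\Gamma$ a positively oriented contour enclosing all $y_i$. Thus $e^{-\tau[\cdots]}$ is the divided difference of $x\mapsto e^{-\tau x}$. *)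

From Stdlib Require Export Reals List.
From Coquelicot Require Export Coquelicot.
Open Scope R_scope.

Definition cexp (z : C) : C :=
  (exp (fst z) * cos (snd z), exp (fst z) * sin (snd z)).

Definition Cprod (l : list C) : C := fold_right Cmult (RtoC 1) l.

Definition dd_radius (ys : list C) : R :=
  1 + fold_right (fun y acc => Cmod y + acc) 0 ys.

Definition circ (r th : R) : C := (r * cos th, r * sin th).

(* Divided difference of f at the nodes ys (repetitions allowed), defined as
   (1/(2 pi i)) \oint_Gamma f(x) / prod_i (x - y_i) dx, with Gamma the positively
   oriented circle |x| = dd_radius ys, which encloses all the nodes.
   Parametrising x = r e^{i th}, dx = i x dth, this is
   (1/(2 pi)) \int_0^{2 pi} f(x) x / prod_i (x - y_i) dth. *)
Definition divdiff (f : C -> C) (ys : list C) : C :=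
  let r := dd_radius ys in
  Cmult (RtoC (/ (2 * PI)))
    (RInt (V := C_R_CompleteNormedModule)
       (fun th => let x := circ r th in
          Cmult (Cmult (f x) x) (Cinv (Cprod (map (fun y => Cminus x y) ys))))
       0 (2 * PI)).

(* e^{t[y_0,...,y_p]} : divided difference of x |-> e^{t x} *)
Definition expdd (t : R) (ys : list C) : C :=
  divdiff (fun x => cexp (Cmult (RtoC t) x)) ys.

(* the nodes x_a, ..., x_b (inclusive), for a <= b *)
Definition nodes (x : nat -> C) (a b : nat) : list C :=
  map x (seq a (S b - a)).

(* Write [c_n(Y)] for the divided difference of [x ^ n] over the nodes [Y]. Expanding
   [e^(t x)] on the contour gives [e^(t[Y]) = sum_n t^n / n! c_n(Y)], and the contour integral
   identifies [c_n(Y)] with the coefficient of [z^(n+1)] in [prod_(y in Y) z / (1 - y z)]. This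
   generating function is multiplicative, so [c_k(Y0 ++ Y1) = sum_(n+m=k-1) c_n(Y0) c_m(Y1)];
   together with the beta integral
   [int_0^beta (-tau)^m/m! (-(beta-tau))^n/n! dtau = - (-beta)^(n+m+1)/(n+m+1)!]
   this proves the identity for the Taylor polynomials of degree [< N], up to the terms of
   total degree [>= N]. Cauchy estimates [|c_n(Y)| <= r^(n+1) / prod_(y in Y) (r - |y|)] on the
   contour of radius [r] bound all errors by multiples of [X^N / N!], which tend to [0]. *)

From Stdlib Require Import Lra Lia Psatz Factorial.

Notation CV := C_R_CompleteNormedModule.

Open Scope C_scope.

(** * Complex-valued Riemann integrals *)

Lemma is_RInt_eq_value {V : NormedModule R_AbsRing} (f : R -> V) a b (l m : V) :
  is_RInt f a b l -> l = m -> is_RInt f a b m.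
Proof. intros H <-; exact H. Qed.

Lemma is_RInt_C_eq_value (f : R -> C) a b (l m : C) :
  is_RInt (V := CV) f a b l -> l = m -> is_RInt (V := CV) f a b m.
Proof. intros H <-; exact H. Qed.

Lemma is_RInt_C_ext (f g : R -> C) a b (l : C) :
  (forall t, f t = g t) -> is_RInt (V := CV) f a b l -> is_RInt (V := CV) g a b l.
Proof. intros E; apply is_RInt_ext; intros; apply E. Qed.

Lemma is_RInt_C (f : R -> C) a b (l : C) :
  is_RInt (fun t => fst (f t)) a b (fst l) ->
  is_RInt (fun t => snd (f t)) a b (snd l) ->
  is_RInt (V := CV) f a b l.
Proof.
  destruct l as [l1 l2].
  exact (is_RInt_fct_extend_pair (U := R_NormedModule) (V := R_NormedModule) f a b l1 l2).
Qed.

Lemma is_RInt_C_fst (f : R -> C) a b (l : C) :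
  is_RInt (V := CV) f a b l -> is_RInt (fun t => fst (f t)) a b (fst l).
Proof. exact (is_RInt_fct_extend_fst (U := R_NormedModule) (V := R_NormedModule) f a b l). Qed.

Lemma is_RInt_C_snd (f : R -> C) a b (l : C) :
  is_RInt (V := CV) f a b l -> is_RInt (fun t => snd (f t)) a b (snd l).
Proof. exact (is_RInt_fct_extend_snd (U := R_NormedModule) (V := R_NormedModule) f a b l). Qed.

Lemma is_RInt_RtoC (f : R -> R) a b l :
  is_RInt f a b l -> is_RInt (V := CV) (fun t => RtoC (f t)) a b (RtoC l).
Proof.
  intros H. apply is_RInt_C; simpl; auto.
  pose proof (is_RInt_const (V := R_NormedModule) a b 0%R) as H0.
  replace (scal _ _) with 0%R in H0 by (unfold scal; simpl; unfold mult; simpl; ring).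
  exact H0.
Qed.

Lemma is_RInt_Cmult_l (c : C) (f : R -> C) a b (l : C) :
  is_RInt (V := CV) f a b l -> is_RInt (V := CV) (fun t => c * f t) a b (c * l).
Proof.
  intros H.
  pose proof (is_RInt_C_fst f a b l H) as H1. pose proof (is_RInt_C_snd f a b l H) as H2.
  apply is_RInt_C; simpl.
  - apply (is_RInt_minus (V := R_NormedModule)); apply (is_RInt_scal (V := R_NormedModule)); auto.
  - apply (is_RInt_plus (V := R_NormedModule)); apply (is_RInt_scal (V := R_NormedModule)); auto.
Qed.

Lemma is_RInt_Cplus (f g : R -> C) a b (l m : C) :
  is_RInt (V := CV) f a b l -> is_RInt (V := CV) g a b m ->
  is_RInt (V := CV) (fun t => f t + g t) a b (l + m).
Proof. exact (is_RInt_plus (V := CV) f g a b l m). Qed.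

Lemma is_RInt_Cminus (f g : R -> C) a b (l m : C) :
  is_RInt (V := CV) f a b l -> is_RInt (V := CV) g a b m ->
  is_RInt (V := CV) (fun t => f t - g t) a b (l - m).
Proof. exact (is_RInt_minus (V := CV) f g a b l m). Qed.

Lemma norm_C (z : C) : @norm R_AbsRing CV z = Cmod z.
Proof.
  unfold norm; simpl; unfold prod_norm, Cmod; simpl. f_equal.
  change (norm (fst z)) with (Rabs (fst z)). change (norm (snd z)) with (Rabs (snd z)).
  rewrite !Rmult_1_r, <- !Rabs_mult, !Rabs_right; try ring; apply Rle_ge, Rle_0_sqr.
Qed.

Lemma Cmod_RInt_le (f : R -> C) a b l (B : R) : (a <= b)%R ->
  (forall t, (a <= t <= b)%R -> (Cmod (f t) <= B)%R) ->
  is_RInt (V := CV) f a b l -> (Cmod l <= (b - a) * B)%R.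
Proof.
  intros Hab HB H. rewrite <- norm_C.
  apply (norm_RInt_le (V := CV) f (fun _ => B) a b); auto.
  - intros t Ht. rewrite norm_C. auto.
  - apply (is_RInt_const (V := R_NormedModule)).
Qed.

(* Componentwise, since [CV] and [C_AbsRing] carry different uniform structures. *)
Definition Ccontinuous (f : R -> C) : Prop :=
  forall t, continuous (fun s => fst (f s)) t /\ continuous (fun s => snd (f s)) t.

Lemma ex_RInt_Ccontinuous (f : R -> C) a b : Ccontinuous f -> ex_RInt (V := CV) f a b.
Proof.
  intros H.
  apply (ex_RInt_fct_extend_pair (U := R_NormedModule) (V := R_NormedModule));
    apply (ex_RInt_continuous (V := R_CompleteNormedModule)); intros; apply H.
Qed.

Lemma Ccontinuous_const (c : C) : Ccontinuous (fun _ => c).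
Proof. split; apply continuous_const. Qed.

Lemma Ccontinuous_plus (f g : R -> C) :
  Ccontinuous f -> Ccontinuous g -> Ccontinuous (fun t => f t + g t).
Proof.
  intros Hf Hg t; destruct (Hf t), (Hg t); split;
    apply (continuous_plus (V := R_NormedModule)); auto.
Qed.

Lemma Ccontinuous_opp (f : R -> C) : Ccontinuous f -> Ccontinuous (fun t => - f t).
Proof.
  intros Hf t; destruct (Hf t); split; apply (continuous_opp (V := R_NormedModule)); auto.
Qed.

Lemma Ccontinuous_mult (f g : R -> C) :
  Ccontinuous f -> Ccontinuous g -> Ccontinuous (fun t => f t * g t).
Proof.
  intros Hf Hg t; destruct (Hf t), (Hg t); split; simpl.
  - apply (continuous_minus (V := R_NormedModule));
      apply (continuous_mult (K := R_AbsRing)); auto.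
  - apply (continuous_plus (V := R_NormedModule));
      apply (continuous_mult (K := R_AbsRing)); auto.
Qed.

Lemma Ccontinuous_pow (f : R -> C) n : Ccontinuous f -> Ccontinuous (fun t => f t ^ n).
Proof.
  intros Hf; induction n; simpl.
  - apply Ccontinuous_const.
  - apply Ccontinuous_mult; auto.
Qed.

Lemma Ccontinuous_inv (f : R -> C) :
  Ccontinuous f -> (forall t, f t <> 0) -> Ccontinuous (fun t => / f t).
Proof.
  intros Hf Hn t; destruct (Hf t) as [H1 H2].
  set (n2 := fun s => (fst (f s) * fst (f s) + snd (f s) * snd (f s))%R).
  assert (Hn2 : n2 t <> 0%R).
  { unfold n2; intro E; apply (Hn t); destruct (f t) as [u v]; simpl in E.
    assert (u = 0%R /\ v = 0%R) as [-> ->] by nra. reflexivity. }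
  assert (Hc : continuous (fun s => / n2 s)%R t).
  { apply continuous_Rinv_comp; auto.
    apply (continuous_plus (V := R_NormedModule));
      apply (continuous_mult (K := R_AbsRing)); auto. }
  split; simpl; fold (n2 t).
  - eapply continuous_ext; [intros s; unfold Rdiv; reflexivity |].
    apply (continuous_mult (K := R_AbsRing)); auto.
    eapply continuous_ext; [| exact Hc]. intros s; unfold n2; simpl; f_equal; ring.
  - apply (continuous_mult (K := R_AbsRing)).
    + apply (continuous_opp (V := R_NormedModule)); auto.
    + eapply continuous_ext; [| exact Hc]. intros s; unfold n2; simpl; f_equal; ring.
Qed.

Lemma continuous_of_ex_derive (f : R -> R) t : ex_derive f t -> continuous f t.
Proof. exact (ex_derive_continuous (K := R_AbsRing) (V := R_NormedModule) f t). Qed.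

Lemma Ccontinuous_cexp (f : R -> C) : Ccontinuous f -> Ccontinuous (fun t => cexp (f t)).
Proof.
  intros Hf t; destruct (Hf t) as [H1 H2]; unfold cexp; simpl.
  assert (Hexp : continuous (fun s => exp (fst (f s))) t).
  { apply (continuous_comp (fun s => fst (f s)) exp); auto.
    apply continuous_of_ex_derive; auto_derive; auto. }
  split; apply (continuous_mult (K := R_AbsRing)); auto.
  - apply (continuous_comp (fun s => snd (f s)) cos); auto.
    apply continuous_of_ex_derive; auto_derive; auto.
  - apply (continuous_comp (fun s => snd (f s)) sin); auto.
    apply continuous_of_ex_derive; auto_derive; auto.
Qed.

Lemma Ccontinuous_circ (r : R) : Ccontinuous (circ r).
Proof.
  intros t; unfold circ; split; simpl; apply continuous_of_ex_derive; auto_derive; auto.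
Qed.

Lemma circ_mult r1 r2 t1 t2 : circ r1 t1 * circ r2 t2 = circ (r1 * r2) (t1 + t2).
Proof.
  unfold circ; rewrite cos_plus, sin_plus; apply injective_projections; simpl; ring.
Qed.

Lemma circ_pow r t n : circ r t ^ n = circ (r ^ n) (INR n * t).
Proof.
  induction n as [|n IH]; simpl Cpow.
  - unfold circ; simpl; rewrite Rmult_0_l, cos_0, sin_0.
    apply injective_projections; simpl; ring.
  - rewrite IH, circ_mult, S_INR; f_equal; simpl; ring.
Qed.

Lemma Cmod_circ r t : (0 <= r)%R -> Cmod (circ r t) = r.
Proof.
  intros Hr; unfold Cmod, circ; cbn [fst snd].
  replace ((r * cos t) ^ 2 + (r * sin t) ^ 2)%R with (r ^ 2)%R.
  - apply sqrt_pow2; auto.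
  - pose proof (sin2_cos2 t) as H; unfold Rsqr in H. nra.
Qed.

Lemma circ_neq0 r t : (0 < r)%R -> circ r t <> 0.
Proof.
  intros Hr E. pose proof (Cmod_circ r t (Rlt_le _ _ Hr)) as H.
  rewrite E, Cmod_0 in H. lra.
Qed.

Lemma circ_inv r t : (0 < r)%R -> / circ r t = circ (/ r) (- t).
Proof.
  intros Hr.
  assert (E : circ r t * circ (/ r) (- t) = 1).
  { rewrite circ_mult, Rinv_r, Rplus_opp_r by lra.
    unfold circ; rewrite cos_0, sin_0; apply injective_projections; simpl; ring. }
  rewrite <- (Cmult_1_r (/ circ r t)), <- E. field. apply circ_neq0; auto.
Qed.

Lemma is_RInt_circ_mult (rho k : R) : k <> 0%R ->
  sin (k * (2 * PI)) = 0%R -> cos (k * (2 * PI)) = 1%R ->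
  is_RInt (V := CV) (fun t => circ rho (k * t)) 0 (2 * PI) (RtoC 0).
Proof.
  intros Hk Hs Hc; apply is_RInt_C; simpl.
  - eapply is_RInt_eq_value.
    + apply (is_RInt_derive (fun t => rho * sin (k * t) / k)%R).
      * intros t _; auto_derive; auto. field; auto.
      * intros t _; apply continuous_of_ex_derive; auto_derive; auto.
    + unfold minus, plus, opp; simpl. rewrite Hs, !Rmult_0_r, sin_0. field; auto.
  - eapply is_RInt_eq_value.
    + apply (is_RInt_derive (fun t => - rho * cos (k * t) / k)%R).
      * intros t _; auto_derive; auto. field; auto.
      * intros t _; apply continuous_of_ex_derive; auto_derive; auto.
    + unfold minus, plus, opp; simpl. rewrite Hc, !Rmult_0_r, cos_0. field; auto.
Qed.

Lemma is_RInt_circ_pow (r : R) (a b : nat) : (0 < r)%R ->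
  is_RInt (V := CV) (fun t => circ r t ^ a * (/ circ r t) ^ b) 0 (2 * PI)
    (if Nat.eqb a b then RtoC (2 * PI) else RtoC 0).
Proof.
  intros Hr.
  assert (E : forall t, circ r t ^ a * (/ circ r t) ^ b
                        = circ (r ^ a * (/ r) ^ b) ((INR a - INR b) * t)).
  { intros t; rewrite circ_inv, !circ_pow, circ_mult by auto; f_equal; ring. }
  assert (Hper : forall n : nat, sin (INR n * (2 * PI)) = 0%R /\ cos (INR n * (2 * PI)) = 1%R).
  { intros n; replace (INR n * (2 * PI))%R with (0 + 2 * INR n * PI)%R by ring.
    rewrite sin_period, cos_period, sin_0, cos_0; auto. }
  apply (is_RInt_C_ext (fun t => circ (r ^ a * (/ r) ^ b) ((INR a - INR b) * t))).
  { intros t; symmetry; apply E. }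
  destruct (Nat.eqb_spec a b) as [<- | Hab].
  - apply (is_RInt_C_ext (fun _ => RtoC 1)).
    { intros t; rewrite Rminus_diag, Rmult_0_l, <- Rpow_mult_distr, Rinv_r, pow1 by lra.
      unfold circ; rewrite cos_0, sin_0; apply injective_projections; simpl; ring. }
    apply is_RInt_RtoC. eapply is_RInt_eq_value.
    + apply (is_RInt_const (V := R_NormedModule)).
    + unfold scal; simpl; unfold mult; simpl; ring.
  - destruct (Nat.lt_ge_cases b a) as [H | H].
    + destruct (Hper (a - b)%nat) as [Hs Hc]. rewrite minus_INR in Hs, Hc by lia.
      apply is_RInt_circ_mult; auto.
      apply Rminus_eq_contra; intro E'; apply INR_eq in E'; lia.
    + destruct (Hper (b - a)%nat) as [Hs Hc]. rewrite minus_INR in Hs, Hc by lia.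
      apply is_RInt_circ_mult.
      * apply Rminus_eq_contra; intro E'; apply INR_eq in E'; lia.
      * replace ((INR a - INR b) * (2 * PI))%R with (- ((INR b - INR a) * (2 * PI)))%R by ring.
        rewrite sin_neg, Hs; ring.
      * replace ((INR a - INR b) * (2 * PI))%R with (- ((INR b - INR a) * (2 * PI)))%R by ring.
        rewrite cos_neg; auto.
Qed.

Fixpoint csum (f : nat -> C) (n : nat) : C :=
  match n with O => 0 | S n => csum f n + f n end.

Lemma csum_last (f : nat -> C) n : csum f (S n) = csum f n + f n.
Proof. reflexivity. Qed.

Lemma csum_ext (f g : nat -> C) n :
  (forall k, (k < n)%nat -> f k = g k) -> csum f n = csum g n.
Proof. induction n; simpl; intros H; auto. rewrite IHn, H; auto. Qed.

Lemma csum_eq0 (f : nat -> C) n : (forall k, (k < n)%nat -> f k = 0) -> csum f n = 0.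
Proof. induction n; simpl; intros H; auto. rewrite IHn, H; auto. ring. Qed.

Lemma csum_mult_l c (f : nat -> C) n : csum (fun k => c * f k) n = c * csum f n.
Proof. induction n; simpl. ring. rewrite IHn; ring. Qed.

Lemma csum_mult_r c (f : nat -> C) n : csum (fun k => f k * c) n = csum f n * c.
Proof. induction n; simpl. ring. rewrite IHn; ring. Qed.

Lemma csum_plus (f g : nat -> C) n : csum (fun k => f k + g k) n = csum f n + csum g n.
Proof. induction n; simpl. ring. rewrite IHn; ring. Qed.

Lemma csum_first (f : nat -> C) n : csum f (S n) = f O + csum (fun k => f (S k)) n.
Proof. induction n; simpl in *. ring. rewrite IHn; ring. Qed.

Lemma csum_trunc (f : nat -> C) d n : (d <= n)%nat ->
  (forall k, (d <= k < n)%nat -> f k = 0) -> csum f n = csum f d.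
Proof.
  induction 1 as [|n Hd IH]; intros H; auto.
  simpl. rewrite H by lia. rewrite IH by (intros; apply H; lia). ring.
Qed.

Lemma csum_single (g : nat -> C) j n : (j < n)%nat ->
  csum (fun k => if Nat.eqb k j then g k else 0) n = g j.
Proof.
  induction n; intros H; [lia|]. simpl.
  destruct (Nat.eqb_spec n j) as [-> | Hn].
  - rewrite csum_eq0; [ring|]. intros k Hk. destruct (Nat.eqb_spec k j); [lia | auto].
  - rewrite IHn by lia. ring.
Qed.

Lemma Cmod_csum_le (f : nat -> C) n (B : R) :
  (forall k, (k < n)%nat -> (Cmod (f k) <= B)%R) -> (Cmod (csum f n) <= INR n * B)%R.
Proof.
  induction n; intros H; simpl csum.
  - rewrite Cmod_0; simpl; lra.
  - eapply Rle_trans; [apply Cmod_triangle |]. rewrite S_INR.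
    pose proof (H n (Nat.lt_succ_diag_r n)). pose proof (IHn (fun k Hk => H k ltac:(lia))).
    lra.
Qed.

Lemma is_RInt_csum (f : nat -> R -> C) (l : nat -> C) a b n :
  (forall k, is_RInt (V := CV) (f k) a b (l k)) ->
  is_RInt (V := CV) (fun t => csum (fun k => f k t) n) a b (csum l n).
Proof.
  intros H; induction n; simpl.
  - eapply is_RInt_C_eq_value; [apply (is_RInt_const (V := CV)) |].
    apply injective_projections; simpl; unfold scal; simpl; unfold mult; simpl; ring.
  - apply is_RInt_Cplus; auto.
Qed.

Lemma Ccontinuous_csum (f : nat -> R -> C) n :
  (forall k, Ccontinuous (f k)) -> Ccontinuous (fun t => csum (fun k => f k t) n).
Proof.
  intros H; induction n; simpl.
  - apply Ccontinuous_const.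
  - apply Ccontinuous_plus; auto.
Qed.

(** * Contour integrals of rational functions *)

Definition node_poly (Y : list C) (x : C) : C := Cprod (map (fun y => x - y) Y).

(* The coefficient of [z ^ k] in [prod_(y in Y) z / (1 - y z)]. *)
Fixpoint hcoef (Y : list C) (k : nat) : C :=
  match Y with
  | nil => if Nat.eqb k 0 then 1 else 0
  | y :: Y' => csum (fun i => y ^ i * hcoef Y' (k - S i)) k
  end.

Definition contour_term (Y : list C) (r : R) (a b : nat) (t : R) : C :=
  circ r t ^ a * (/ circ r t) ^ b * / node_poly Y (circ r t).

Definition inside (r : R) (Y : list C) : Prop := forall y, In y Y -> (Cmod y < r)%R.

Definition dist_prod (r : R) (Y : list C) : R :=
  fold_right (fun y acc => (r - Cmod y) * acc)%R 1%R Y.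

Lemma inside_cons r y Y : inside r (y :: Y) -> (Cmod y < r)%R /\ inside r Y.
Proof. intros H; split; [apply H; left | intros z Hz; apply H; right]; auto. Qed.

Lemma node_poly_circ_lower r t Y : (0 < r)%R -> inside r Y ->
  (0 < dist_prod r Y)%R /\ (dist_prod r Y <= Cmod (node_poly Y (circ r t)))%R.
Proof.
  intros Hr HY; induction Y as [|y Y IH]; unfold node_poly, dist_prod in *; simpl.
  - rewrite Cmod_1; lra.
  - destruct (inside_cons _ _ _ HY) as [Hy HY'].
    destruct (IH HY') as [IH1 IH2]. rewrite Cmod_mult.
    pose proof (Cmod_triangle (circ r t - y) y) as Htri.
    replace (circ r t - y + y) with (circ r t) in Htri by ring.
    rewrite Cmod_circ in Htri by lra.
    split; [apply Rmult_lt_0_compat | apply Rmult_le_compat]; lra.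
Qed.

Lemma node_poly_circ_neq0 r t Y : (0 < r)%R -> inside r Y -> node_poly Y (circ r t) <> 0.
Proof.
  intros Hr HY E. destruct (node_poly_circ_lower r t Y Hr HY) as [H1 H2].
  rewrite E, Cmod_0 in H2. lra.
Qed.

Lemma Ccontinuous_node_poly Y (f : R -> C) :
  Ccontinuous f -> Ccontinuous (fun t => node_poly Y (f t)).
Proof.
  intros Hf; induction Y as [|y Y IH]; unfold node_poly; simpl.
  - apply Ccontinuous_const.
  - apply Ccontinuous_mult; auto.
    apply Ccontinuous_plus, Ccontinuous_opp, Ccontinuous_const; auto.
Qed.

Lemma Ccontinuous_contour_term Y r a b : (0 < r)%R -> inside r Y ->
  Ccontinuous (contour_term Y r a b).
Proof.
  intros Hr HY. pose proof (Ccontinuous_circ r).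
  apply Ccontinuous_mult; [apply Ccontinuous_mult |].
  - apply Ccontinuous_pow; auto.
  - apply Ccontinuous_pow, Ccontinuous_inv; auto. intros; apply circ_neq0; auto.
  - apply Ccontinuous_inv; [apply Ccontinuous_node_poly; auto |].
    intros; apply node_poly_circ_neq0; auto.
Qed.

Lemma Cmod_contour_term_le Y r a b t : (0 < r)%R -> inside r Y ->
  (Cmod (contour_term Y r a b t) <= r ^ a * (/ r) ^ b * / dist_prod r Y)%R.
Proof.
  intros Hr HY. destruct (node_poly_circ_lower r t Y Hr HY) as [H1 H2].
  unfold contour_term.
  rewrite !Cmod_mult, !Cmod_pow, !Cmod_inv, Cmod_circ
    by (lra || apply circ_neq0 || apply node_poly_circ_neq0; auto).
  apply Rmult_le_compat_l.
  - apply Rmult_le_pos; apply pow_le; [lra | left; apply Rinv_0_lt_compat; lra].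
  - apply Rinv_le_contravar; auto.
Qed.

Lemma Cinv_sub_geom (x y : C) n : x <> 0 -> x - y <> 0 ->
  / (x - y) = csum (fun k => y ^ k * (/ x) ^ S k) n + y ^ n * (/ x) ^ n * / (x - y).
Proof.
  intros Hx Hxy. induction n as [|n IH]; simpl csum.
  - simpl. ring.
  - rewrite IH at 1. rewrite <- Cplus_assoc. f_equal. rewrite !Cpow_S. field. auto.
Qed.

Lemma contour_term_cons y Y r a b n t : (0 < r)%R -> inside r (y :: Y) ->
  contour_term (y :: Y) r a b t =
  csum (fun k => y ^ k * contour_term Y r a (b + S k) t) n
  + y ^ n * contour_term (y :: Y) r a (b + n) t.
Proof.
  intros Hr HY. set (x := circ r t).
  assert (Hx : x <> 0) by (apply circ_neq0; auto).
  assert (Hxy : x - y <> 0).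
  { intros E. apply (node_poly_circ_neq0 r t (y :: nil) Hr).
    - intros z [<- | []]; apply HY; left; auto.
    - unfold node_poly; simpl; fold x; rewrite E; ring. }
  assert (HP : node_poly Y x <> 0)
    by (apply node_poly_circ_neq0; [| apply (inside_cons r y)]; auto).
  unfold contour_term. fold x. unfold node_poly at 1 3; simpl; fold (node_poly Y x).
  set (c := x ^ a * (/ x) ^ b * / node_poly Y x).
  transitivity (c * / (x - y)); [unfold c; field; auto |].
  rewrite (Cinv_sub_geom x y n), Cmult_plus_distr_l, <- csum_mult_l by auto.
  unfold c; f_equal; [apply csum_ext; intros k _ |]; rewrite Cpow_add_r; field; auto.
Qed.

Lemma hcoef_cons_sum y Y a b n : (a < n)%nat ->
  csum (fun k => y ^ k * (if Nat.leb (b + S k) a then hcoef Y (a - (b + S k)) else 0)) n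
  = if Nat.leb b a then hcoef (y :: Y) (a - b) else 0.
Proof.
  intros Hn. simpl hcoef.
  destruct (Nat.leb_spec b a) as [Hba | Hba].
  - rewrite (csum_trunc _ (a - b)); [| lia |].
    2: { intros k Hk; destruct (Nat.leb_spec (b + S k) a); [lia | ring]. }
    apply csum_ext; intros k Hk.
    destruct (Nat.leb_spec (b + S k) a); [| lia]. do 2 f_equal. lia.
  - apply csum_eq0; intros k Hk. destruct (Nat.leb_spec (b + S k) a); [lia | ring].
Qed.

Lemma Cmod_le_geom_eq0 (z : C) (K q : R) n0 : (0 <= q < 1)%R ->
  (forall n, (n0 <= n)%nat -> (Cmod z <= K * q ^ n)%R) -> z = 0.
Proof.
  intros Hq H. destruct (Ceq_dec z 0) as [-> | Hz]; auto. exfalso.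
  assert (Hm : (0 < Cmod z)%R) by (apply Rnot_le_lt; intro; apply Hz, Cmod_eq_0;
                                     pose proof (Cmod_ge_0 z); lra).
  destruct (Rle_lt_dec K 0) as [HK | HK].
  - specialize (H n0 (le_n _)). assert (0 <= q ^ n0)%R by (apply pow_le; lra). nra.
  - destruct (pow_lt_1_zero q ltac:(rewrite Rabs_right; lra) (Cmod z / K)) as [n1 Hn1].
    { apply Rdiv_lt_0_compat; auto. }
    specialize (Hn1 (Nat.max n0 n1) ltac:(lia)). specialize (H (Nat.max n0 n1) ltac:(lia)).
    rewrite Rabs_right in Hn1 by (apply Rle_ge, pow_le; lra).
    apply (Rmult_lt_compat_l K) in Hn1; auto.
    replace (K * (Cmod z / K))%R with (Cmod z) in Hn1 by (field; lra). lra.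
Qed.

Lemma Cmod_RInt_contour_term_le Y r a b (W : C) : (0 < r)%R -> inside r Y ->
  is_RInt (V := CV) (contour_term Y r a b) 0 (2 * PI) W ->
  (Cmod W <= 2 * PI * (r ^ a * (/ r) ^ b * / dist_prod r Y))%R.
Proof.
  intros Hr HY HW. pose proof PI_RGT_0. replace (2 * PI)%R with (2 * PI - 0)%R at 1 by ring.
  apply (Cmod_RInt_le (contour_term Y r a b) 0 (2 * PI) W); auto; [lra |].
  intros t _; apply Cmod_contour_term_le; auto.
Qed.

Lemma RInt_contour_term_cons y Y r a b n (V W : C) :
  (0 < r)%R -> inside r (y :: Y) -> (a < n)%nat ->
  (forall a b, is_RInt (V := CV) (contour_term Y r a b) 0 (2 * PI)
                 (RtoC (2 * PI) * (if Nat.leb b a then hcoef Y (a - b) else 0))) ->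
  is_RInt (V := CV) (contour_term (y :: Y) r a b) 0 (2 * PI) V ->
  is_RInt (V := CV) (contour_term (y :: Y) r a (b + n)) 0 (2 * PI) W ->
  V = RtoC (2 * PI) * (if Nat.leb b a then hcoef (y :: Y) (a - b) else 0) + y ^ n * W.
Proof.
  intros Hr HY Hn IH HV HW.
  assert (Hsplit := is_RInt_Cplus _ _ _ _ _ _
     (is_RInt_csum (fun k t => y ^ k * contour_term Y r a (b + S k) t) _ 0 (2 * PI) n
        (fun k => is_RInt_Cmult_l (y ^ k) _ _ _ _ (IH a (b + S k)%nat)))
     (is_RInt_Cmult_l (y ^ n) _ _ _ _ HW)).
  apply (is_RInt_C_ext _ (contour_term (y :: Y) r a b)) in Hsplit;
    [| intros t; symmetry; apply contour_term_cons; auto].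
  rewrite <- (is_RInt_unique _ _ _ _ HV), (is_RInt_unique _ _ _ _ Hsplit).
  rewrite <- (hcoef_cons_sum y Y a b n Hn), <- csum_mult_l.
  f_equal. apply csum_ext; intros; ring.
Qed.

(* Expanding [/ (x - y)] geometrically reduces the integral for [y :: Y] to those for [Y]
   up to a remainder of size [(|y| / r) ^ n]. *)
Lemma is_RInt_contour_term Y r a b : (0 < r)%R -> inside r Y ->
  is_RInt (V := CV) (contour_term Y r a b) 0 (2 * PI)
    (RtoC (2 * PI) * (if Nat.leb b a then hcoef Y (a - b) else 0)).
Proof.
  intros Hr. pose proof PI_RGT_0. revert a b.
  induction Y as [|y Y IH]; intros a b HY.
  - apply (is_RInt_C_ext (fun t => circ r t ^ a * (/ circ r t) ^ b)).
    { intros t; unfold contour_term, node_poly; simpl. field. }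
    eapply is_RInt_C_eq_value; [apply is_RInt_circ_pow; auto |]. simpl.
    destruct (Nat.eqb_spec a b), (Nat.leb_spec b a), (Nat.eqb_spec (a - b) 0);
      try lia; ring.
  - destruct (inside_cons _ _ _ HY) as [Hy HY'].
    destruct (ex_RInt_Ccontinuous _ 0 (2 * PI)
                (Ccontinuous_contour_term (y :: Y) r a b Hr HY)) as [V HV].
    change C in V. eapply is_RInt_C_eq_value; [apply HV |].
    set (V' := RtoC (2 * PI) * _).
    enough (E : V - V' = 0) by (replace V with (V - V' + V') by ring; rewrite E; ring).
    apply (Cmod_le_geom_eq0 _ (2 * PI * (r ^ a * (/ r) ^ b * / dist_prod r (y :: Y)))
             (Cmod y / r) (S a)).
    { split; [apply Rmult_le_pos; [apply Cmod_ge_0 | left; apply Rinv_0_lt_compat; auto] |].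
      apply Rmult_lt_reg_r with r; auto. unfold Rdiv. rewrite Rmult_assoc, Rinv_l; lra. }
    intros n Hn.
    destruct (ex_RInt_Ccontinuous _ 0 (2 * PI)
                (Ccontinuous_contour_term (y :: Y) r a (b + n) Hr HY)) as [W HW].
    change C in W.
    rewrite (RInt_contour_term_cons y Y r a b n V W) by auto.
    unfold V'. replace (_ + y ^ n * W - _) with (y ^ n * W) by ring.
    rewrite Cmod_mult, Cmod_pow.
    pose proof (Cmod_RInt_contour_term_le (y :: Y) r a (b + n) W Hr HY HW).
    eapply Rle_trans; [apply Rmult_le_compat_l; [apply pow_le, Cmod_ge_0 | eassumption] |].
    rewrite pow_add. unfold Rdiv. rewrite Rpow_mult_distr. right. ring.
Qed.

(** * Taylor expansion of divided differences *)

Lemma INR_fact_pos n : (0 < INR (fact n))%R.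
Proof. apply lt_0_INR, lt_O_fact. Qed.

Lemma is_RInt_pow_fact n s :
  is_RInt (fun u => u ^ n / INR (fact n))%R 0 s (s ^ S n / INR (fact (S n)))%R.
Proof.
  pose proof (INR_fact_neq_0 n).
  eapply is_RInt_eq_value.
  - apply (is_RInt_derive (fun u => u ^ S n / INR (fact (S n)))%R).
    + intros u _. auto_derive; auto.
      change (fact n + n * fact n)%nat with (fact (S n)).
      change (match n with 0%nat => 1 | S _ => INR n + 1 end)%R with (INR (S n)).
      rewrite fact_simpl, mult_INR. field. split; auto. apply not_0_INR; lia.
    + intros u _. apply continuous_of_ex_derive. auto_derive; auto.
  - unfold minus, plus, opp; simpl. unfold Rdiv. ring.
Qed.

Lemma is_RInt_Cpow_fact n s (w : C) :
  is_RInt (V := CV) (fun u => RtoC (u ^ n / INR (fact n)) * w) 0 s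
    (RtoC (s ^ S n / INR (fact (S n))) * w).
Proof.
  apply (is_RInt_C_ext (fun u => w * RtoC (u ^ n / INR (fact n)))).
  { intros; ring. }
  eapply is_RInt_C_eq_value; [apply is_RInt_Cmult_l, is_RInt_RtoC, is_RInt_pow_fact |].
  ring.
Qed.

Lemma exp_le_compat x y : (x <= y)%R -> (exp x <= exp y)%R.
Proof. intros [H | <-]; [left; apply exp_increasing | right]; auto. Qed.

Lemma Cmod_cexp z : Cmod (cexp z) = exp (fst z).
Proof.
  unfold Cmod, cexp; cbn [fst snd].
  pose proof (sin2_cos2 (snd z)) as H; unfold Rsqr in H.
  replace ((exp (fst z) * cos (snd z)) ^ 2 + (exp (fst z) * sin (snd z)) ^ 2)%R
    with (exp (fst z) ^ 2)%R by nra.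
  apply sqrt_pow2. left; apply exp_pos.
Qed.

Lemma is_RInt_cexp (z : C) (s : R) :
  is_RInt (V := CV) (fun u => z * cexp (RtoC u * z)) 0 s (cexp (RtoC s * z) - 1).
Proof.
  destruct z as [a b]. apply is_RInt_C; simpl.
  - eapply is_RInt_eq_value.
    + apply (is_RInt_derive (fun u => exp (u * a - 0 * b) * cos (u * b + 0 * a))%R).
      * intros u _. auto_derive; auto. unfold Rminus. ring.
      * intros u _. apply continuous_of_ex_derive. auto_derive; auto.
    + unfold minus, plus, opp; simpl.
      rewrite !Rmult_0_l, !Rminus_0_r, !Rplus_0_r, exp_0, cos_0. ring.
  - eapply is_RInt_eq_value.
    + apply (is_RInt_derive (fun u => exp (u * a - 0 * b) * sin (u * b + 0 * a))%R).
      * intros u _. auto_derive; auto. unfold Rminus. ring.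
      * intros u _. apply continuous_of_ex_derive. auto_derive; auto.
    + unfold minus, plus, opp; simpl.
      rewrite !Rmult_0_l, !Rminus_0_r, !Rplus_0_r, exp_0, sin_0. ring.
Qed.

Definition cexp_rem (n : nat) (z : C) (s : R) : C :=
  cexp (RtoC s * z) - csum (fun k => RtoC (s ^ k / INR (fact k)) * z ^ k) n.

Lemma is_RInt_cexp_rem n z s :
  is_RInt (V := CV) (fun u => z * cexp_rem n z u) 0 s (cexp_rem (S n) z s).
Proof.
  apply (is_RInt_C_ext (fun u => z * cexp (RtoC u * z)
           - csum (fun k => RtoC (u ^ k / INR (fact k)) * z ^ S k) n)).
  { intros u. unfold cexp_rem.
    replace (csum (fun k => RtoC (u ^ k / INR (fact k)) * z ^ S k) n)
      with (z * csum (fun k => RtoC (u ^ k / INR (fact k)) * z ^ k) n); [ring |].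
    rewrite <- csum_mult_l. apply csum_ext; intros; simpl; ring. }
  eapply is_RInt_C_eq_value.
  - apply is_RInt_Cminus; [apply is_RInt_cexp |].
    apply (is_RInt_csum (fun k u => RtoC (u ^ k / INR (fact k)) * z ^ S k)).
    intros; apply is_RInt_Cpow_fact.
  - unfold cexp_rem. rewrite csum_first. simpl.
    replace (1 / 1)%R with 1%R by field. ring.
Qed.

Lemma Cmod_cexp_rem_le z n s : (0 <= s <= 1)%R ->
  (Cmod (cexp_rem n z s) <= Cmod z ^ n * (s ^ n / INR (fact n)) * exp (Cmod z))%R.
Proof.
  revert s. induction n as [|n IH]; intros s Hs.
  - unfold cexp_rem; simpl csum.
    replace (cexp (RtoC s * z) - 0) with (cexp (RtoC s * z)) by ring.
    rewrite Cmod_cexp. simpl.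
    replace (1 * (1 / 1) * exp (Cmod z))%R with (exp (Cmod z)) by field.
    apply exp_le_compat. simpl fst.
    pose proof (re_le_Cmod z) as Hre; unfold Re in Hre.
    pose proof (Rle_abs (fst z)). pose proof (Rabs_pos (fst z)). nra.
  - rewrite <- norm_C.
    apply (norm_RInt_le (V := CV) (fun u => z * cexp_rem n z u)
             (fun u => Cmod z ^ S n * exp (Cmod z) * (u ^ n / INR (fact n)))%R 0 s);
      [lra | | apply is_RInt_cexp_rem |].
    + intros u Hu. rewrite norm_C, Cmod_mult. simpl pow.
      specialize (IH u ltac:(lra)).
      pose proof (Cmod_ge_0 z). nra.
    + eapply is_RInt_eq_value.
      * apply (is_RInt_scal (V := R_NormedModule)), is_RInt_pow_fact.
      * unfold scal; simpl; unfold mult; simpl. ring.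
Qed.

Lemma sum_Cmod_nonneg (Y : list C) : (0 <= fold_right (fun y acc => Cmod y + acc) 0 Y)%R.
Proof. induction Y as [|y Y IH]; simpl; [lra | pose proof (Cmod_ge_0 y); lra]. Qed.

Lemma dd_radius_pos Y : (0 < dd_radius Y)%R.
Proof. unfold dd_radius. pose proof (sum_Cmod_nonneg Y). lra. Qed.

Lemma inside_dd_radius Y : inside (dd_radius Y) Y.
Proof.
  intros y Hy. unfold dd_radius.
  enough (Cmod y <= fold_right (fun y acc => Cmod y + acc) 0 Y)%R by lra.
  induction Y as [|z Y IH]; simpl; [destruct Hy |].
  pose proof (Cmod_ge_0 z). pose proof (sum_Cmod_nonneg Y).
  destruct Hy as [-> | Hy]; [| specialize (IH Hy)]; lra.
Qed.

Lemma dist_prod_dd_radius_pos Y : (0 < dist_prod (dd_radius Y) Y)%R.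
Proof. apply (node_poly_circ_lower _ 0), inside_dd_radius. apply dd_radius_pos. Qed.

Lemma Cmod_hcoef_le Y n :
  (Cmod (hcoef Y n) <= dd_radius Y ^ n / dist_prod (dd_radius Y) Y)%R.
Proof.
  pose proof PI_RGT_0. pose proof (dd_radius_pos Y) as Hr. pose proof (inside_dd_radius Y) as HY.
  pose proof (Cmod_RInt_contour_term_le _ _ n 0 _ Hr HY (is_RInt_contour_term Y _ n 0 Hr HY))
    as Hn.
  rewrite Nat.sub_0_r, Cmod_mult, Cmod_R, Rabs_right in Hn by lra. simpl in Hn.
  apply Rmult_le_reg_l with (2 * PI)%R; [lra |]. unfold Rdiv. lra.
Qed.

Lemma expdd_RInt t Y : expdd t Y = RtoC (/ (2 * PI)) * RInt (V := CV)
  (fun th => let x := circ (dd_radius Y) th in cexp (RtoC t * x) * x * / node_poly Y x) 0 (2 * PI).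
Proof. reflexivity. Qed.

Definition expdd_taylor (n : nat) (t : R) (Y : list C) : C :=
  csum (fun k => RtoC (t ^ k / INR (fact k)) * hcoef Y (S k)) n.

Definition expdd_rem_term (n : nat) (t : R) (Y : list C) (th : R) : C :=
  let x := circ (dd_radius Y) th in cexp_rem n (RtoC t * x) 1 * (x * / node_poly Y x).

Lemma expdd_integrand_split t Y n th :
  let x := circ (dd_radius Y) th in
  cexp (RtoC t * x) * x * / node_poly Y x
  = csum (fun k => RtoC (t ^ k / INR (fact k)) * contour_term Y (dd_radius Y) (S k) 0 th) n
    + expdd_rem_term n t Y th.
Proof.
  intros x. unfold expdd_rem_term, cexp_rem. fold x. rewrite Cmult_1_l.
  replace (csum (fun k => RtoC (t ^ k / INR (fact k)) * contour_term Y _ (S k) 0 th) n)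
    with (x * / node_poly Y x * csum (fun k => RtoC (1 ^ k / INR (fact k)) * (RtoC t * x) ^ k) n);
    [ring |].
  rewrite <- csum_mult_l. apply csum_ext; intros k _. unfold contour_term; fold x.
  rewrite Cpow_mult_l, <- RtoC_pow, pow1. simpl Cpow.
  unfold Rdiv. rewrite Rmult_1_l, RtoC_mult. ring.
Qed.

Lemma Ccontinuous_expdd_rem_term n t Y : Ccontinuous (expdd_rem_term n t Y).
Proof.
  pose proof (dd_radius_pos Y) as Hr. pose proof (inside_dd_radius Y) as HY.
  pose proof (Ccontinuous_circ (dd_radius Y)). unfold expdd_rem_term, cexp_rem.
  apply Ccontinuous_mult; [apply Ccontinuous_plus; [| apply Ccontinuous_opp] |].
  - apply Ccontinuous_cexp, Ccontinuous_mult, Ccontinuous_mult; auto; apply Ccontinuous_const.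
  - apply (Ccontinuous_csum (fun k th => RtoC (1 ^ k / INR (fact k))
                                         * (RtoC t * circ (dd_radius Y) th) ^ k)).
    intros k; apply Ccontinuous_mult, Ccontinuous_pow, Ccontinuous_mult; auto;
      apply Ccontinuous_const.
  - apply Ccontinuous_mult, Ccontinuous_inv; auto; [apply Ccontinuous_node_poly; auto |].
    intros; apply node_poly_circ_neq0; auto.
Qed.

Lemma Cmod_expdd_rem_term_le n t Y th :
  (Cmod (expdd_rem_term n t Y th) <=
   (Rabs t * dd_radius Y) ^ n / INR (fact n) * exp (Rabs t * dd_radius Y)
   * (dd_radius Y / dist_prod (dd_radius Y) Y))%R.
Proof.
  pose proof (dd_radius_pos Y) as Hr. pose proof (inside_dd_radius Y) as HY.
  set (r := dd_radius Y) in *. unfold expdd_rem_term. fold r. rewrite Cmod_mult.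
  destruct (node_poly_circ_lower r th Y Hr HY) as [HL1 HL2].
  apply Rmult_le_compat; try apply Cmod_ge_0.
  - eapply Rle_trans; [apply Cmod_cexp_rem_le; lra |].
    rewrite Cmod_mult, Cmod_R, Cmod_circ, pow1 by lra. right; unfold Rdiv; ring.
  - rewrite Cmod_mult, Cmod_circ, Cmod_inv by (lra || apply node_poly_circ_neq0; auto).
    unfold Rdiv. apply Rmult_le_compat_l; [lra |]. apply Rinv_le_contravar; auto.
Qed.

Lemma expdd_sub_taylor_RInt n t Y (I : C) :
  is_RInt (V := CV) (expdd_rem_term n t Y) 0 (2 * PI) I ->
  expdd t Y - expdd_taylor n t Y = RtoC (/ (2 * PI)) * I.
Proof.
  intros HI. pose proof PI_RGT_0.
  pose proof (dd_radius_pos Y) as Hr. pose proof (inside_dd_radius Y) as HY.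
  assert (Hexp := is_RInt_Cplus _ _ _ _ _ _
    (is_RInt_csum (fun k th => RtoC (t ^ k / INR (fact k)) * contour_term Y _ (S k) 0 th)
       _ 0 (2 * PI) n
       (fun k => is_RInt_Cmult_l _ _ _ _ _ (is_RInt_contour_term Y _ (S k) 0 Hr HY))) HI).
  apply (is_RInt_C_ext _ (fun th => let x := circ (dd_radius Y) th in
                                    cexp (RtoC t * x) * x * / node_poly Y x))
    in Hexp; [| intros th; symmetry; apply expdd_integrand_split].
  rewrite expdd_RInt, (is_RInt_unique _ _ _ _ Hexp).
  rewrite (csum_ext _ (fun k => RtoC (2 * PI) * (RtoC (t ^ k / INR (fact k)) * hcoef Y (S k))))
    by (intros; simpl; ring).
  rewrite csum_mult_l. fold (expdd_taylor n t Y).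
  rewrite Cmult_plus_distr_l, Cmult_assoc, <- RtoC_mult, Rinv_l by lra. ring.
Qed.

Lemma Cmod_expdd_sub_taylor_le t Y n :
  (Cmod (expdd t Y - expdd_taylor n t Y) <=
   (Rabs t * dd_radius Y) ^ n / INR (fact n) * exp (Rabs t * dd_radius Y)
   * (dd_radius Y / dist_prod (dd_radius Y) Y))%R.
Proof.
  pose proof PI_RGT_0.
  destruct (ex_RInt_Ccontinuous _ 0 (2 * PI) (Ccontinuous_expdd_rem_term n t Y)) as [I HI].
  change C in I. rewrite (expdd_sub_taylor_RInt n t Y I HI).
  rewrite Cmod_mult, Cmod_R, Rabs_right by (left; apply Rinv_0_lt_compat; lra).
  apply Rmult_le_reg_l with (2 * PI)%R; [lra |].
  rewrite <- Rmult_assoc, Rinv_r, Rmult_1_l by lra.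
  replace (2 * PI)%R with (2 * PI - 0)%R at 1 by ring.
  apply (Cmod_RInt_le (expdd_rem_term n t Y) 0 (2 * PI) I); [lra | | exact HI].
  intros th _. apply Cmod_expdd_rem_term_le.
Qed.

Lemma Cmod_expdd_le t Y :
  (Cmod (expdd t Y) <=
   exp (Rabs t * dd_radius Y) * (dd_radius Y / dist_prod (dd_radius Y) Y))%R.
Proof.
  pose proof (Cmod_expdd_sub_taylor_le t Y 0) as H.
  unfold expdd_taylor in H; simpl in H.
  replace (expdd t Y - 0) with (expdd t Y) in H by ring. lra.
Qed.

(** * Coefficients of concatenated node lists *)

Definition conv (f g : nat -> C) (k : nat) : C := csum (fun i => f i * g (k - i)%nat) (S k).

Lemma csum_triangle_swap (F : nat -> nat -> C) k :
  csum (fun m => csum (fun i => F i m) (S m)) (S k) =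
  csum (fun i => csum (fun j => F i (i + j)%nat) (S (k - i))) (S k).
Proof.
  induction k as [|k IH]; [simpl; ring |].
  rewrite csum_last, IH.
  rewrite (csum_last (fun i => csum (fun j => F i (i + j)%nat) (S (S k - i))) (S k)), Nat.sub_diag.
  rewrite (csum_ext (fun i => csum (fun j => F i (i + j)%nat) (S (S k - i)))
             (fun i => csum (fun j => F i (i + j)%nat) (S (k - i)) + F i (S k))).
  - rewrite csum_plus, (csum_last (fun i => F i (S k))).
    simpl (csum _ 1). rewrite Nat.add_0_r. ring.
  - intros i Hi. replace (S k - i)%nat with (S (k - i)) by lia.
    rewrite csum_last. do 2 f_equal. lia.
Qed.

Lemma conv_assoc f g h k : conv f (conv g h) k = conv (conv f g) h k.
Proof.
  unfold conv.
  rewrite (csum_ext (fun m => csum (fun i => f i * g (m - i)%nat) (S m) * h (k - m)%nat)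
                    (fun m => csum (fun i => f i * g (m - i)%nat * h (k - m)%nat) (S m)))
    by (intros; rewrite <- csum_mult_r; auto).
  rewrite (csum_triangle_swap (fun i m => f i * g (m - i)%nat * h (k - m)%nat)).
  apply csum_ext; intros i Hi. rewrite <- csum_mult_l. apply csum_ext; intros j Hj.
  replace (i + j - i)%nat with j by lia. replace (k - (i + j))%nat with (k - i - j)%nat by lia.
  ring.
Qed.

Lemma conv_hcoef_nil_l g k : conv (hcoef nil) g k = g k.
Proof.
  unfold conv. rewrite csum_first, csum_eq0; simpl; [rewrite Nat.sub_0_r; ring |].
  intros; ring.
Qed.

Lemma hcoef_cons y Y k :
  hcoef (y :: Y) k = conv (fun i => if Nat.eqb i 0 then 0 else y ^ (i - 1)) (hcoef Y) k.
Proof.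
  unfold conv. rewrite csum_first. simpl.
  rewrite Cmult_0_l, Cplus_0_l. apply csum_ext; intros i Hi. rewrite Nat.sub_0_r. reflexivity.
Qed.

Lemma hcoef_app Y0 Y1 k : hcoef (Y0 ++ Y1) k = conv (hcoef Y0) (hcoef Y1) k.
Proof.
  revert k. induction Y0 as [|y Y0 IH]; intros k; simpl app.
  - symmetry; apply conv_hcoef_nil_l.
  - rewrite hcoef_cons.
    unfold conv at 1. rewrite (csum_ext _ (fun i => _ * conv (hcoef Y0) (hcoef Y1) (k - i)))
      by (intros; rewrite IH; reflexivity).
    fold (conv (fun i => if Nat.eqb i 0 then 0 else y ^ (i - 1))
               (conv (hcoef Y0) (hcoef Y1)) k).
    rewrite conv_assoc. unfold conv at 1 3. apply csum_ext; intros i _.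
    rewrite <- hcoef_cons. reflexivity.
Qed.

Lemma hcoef_app_S Y0 Y1 k : Y0 <> nil -> Y1 <> nil ->
  hcoef (Y0 ++ Y1) (S k) = csum (fun n => hcoef Y0 (S n) * hcoef Y1 (S (k - S n))) k.
Proof.
  intros H0 H1.
  assert (Hz : forall Y, Y <> nil -> hcoef Y 0 = 0) by (intros [|y Y] HY; [tauto | reflexivity]).
  rewrite hcoef_app. unfold conv. rewrite csum_first, Hz, csum_last, Nat.sub_diag, (Hz Y1)
    by auto.
  rewrite Cmult_0_r, Cmult_0_l, Cplus_0_l, Cplus_0_r.
  apply csum_ext; intros n Hn. do 2 f_equal. lia.
Qed.

(** * Integrating products of Taylor polynomials *)

Lemma is_RInt_beta m n (b : R) :
  is_RInt (fun u => u ^ m / INR (fact m) * ((b - u) ^ n / INR (fact n)))%R 0 b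
    (b ^ (m + n + 1) / INR (fact (m + n + 1)))%R.
Proof.
  revert m. induction n as [|n IH]; intros m.
  - eapply is_RInt_ext; [| eapply is_RInt_eq_value; [apply (is_RInt_pow_fact m b) |]].
    + intros; simpl; field. apply INR_fact_neq_0.
    + rewrite Nat.add_0_r, Nat.add_1_r. reflexivity.
  - set (F := fun u => (u ^ S m / INR (fact (S m)) * ((b - u) ^ S n / INR (fact (S n))))%R).
    set (dF := fun u => (u ^ m / INR (fact m) * ((b - u) ^ S n / INR (fact (S n)))
                        - u ^ S m / INR (fact (S m)) * ((b - u) ^ n / INR (fact n)))%R).
    assert (HdF : is_RInt dF 0 b 0%R).
    { eapply is_RInt_eq_value; [apply (is_RInt_derive F dF) |].
      - intros u _. unfold F, dF. auto_derive; auto.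
        pose proof (INR_fact_neq_0 m). pose proof (INR_fact_neq_0 n).
        change (fact m + m * fact m)%nat with (fact (S m)).
        change (fact n + n * fact n)%nat with (fact (S n)).
        change (match m with 0%nat => 1 | S _ => INR m + 1 end)%R with (INR (S m)).
        change (match n with 0%nat => 1 | S _ => INR n + 1 end)%R with (INR (S n)).
        rewrite !fact_simpl, !mult_INR. unfold Rminus. simpl pow.
        field. repeat split; auto; apply not_0_INR; lia.
      - intros u _. apply continuous_of_ex_derive. unfold dF. auto_derive; auto.
      - unfold F, minus, plus, opp; simpl. unfold Rdiv. ring. }
    pose proof (is_RInt_plus (V := R_NormedModule) _ _ _ _ _ _ HdF (IH (S m))) as Hsum.
    replace (m + S n + 1)%nat with (S m + n + 1)%nat by lia.
    eapply is_RInt_eq_value; [| unfold plus; simpl; apply Rplus_0_l].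
    eapply is_RInt_ext; [| exact Hsum].
    intros u _. unfold dF, plus; simpl. ring.
Qed.

Definition csum2 (N : nat) (F : nat -> nat -> C) : C :=
  csum (fun n => csum (fun m => F n m) N) N.

Lemma csum2_plus N F G : csum2 N F + csum2 N G = csum2 N (fun n m => F n m + G n m).
Proof. unfold csum2. rewrite <- csum_plus. apply csum_ext; intros. symmetry; apply csum_plus. Qed.

Lemma Cmod_csum2_le N F (B : R) :
  (forall n m, (n < N)%nat -> (m < N)%nat -> (Cmod (F n m) <= B)%R) ->
  (Cmod (csum2 N F) <= INR N * (INR N * B))%R.
Proof. intros H. apply Cmod_csum_le; intros n Hn. apply Cmod_csum_le; auto. Qed.

Lemma csum_triangle_square (F : nat -> nat -> C) K :
  csum (fun k => csum (fun n => F n (k - S n)%nat) k) K =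
  csum2 K (fun n m => if Nat.ltb (S (n + m)) K then F n m else 0).
Proof.
  unfold csum2. induction K as [|K IH]; [reflexivity |].
  rewrite csum_last, IH, <- csum_plus, csum_last.
  rewrite (csum_eq0 (fun m => if Nat.ltb (S (K + m)) (S K) then F K m else 0)), Cplus_0_r.
  2: { intros m _. destruct (Nat.ltb_spec (S (K + m)) (S K)); [lia | reflexivity]. }
  apply csum_ext; intros n Hn.
  rewrite csum_last. destruct (Nat.ltb_spec (S (n + K)) (S K)); [lia |]. rewrite Cplus_0_r.
  rewrite (csum_ext (fun m => if Nat.ltb (S (n + m)) (S K) then F n m else 0)
                    (fun m => (if Nat.ltb (S (n + m)) K then F n m else 0)
                              + (if Nat.eqb m (K - S n) then F n m else 0)) K).
  - rewrite csum_plus, csum_single by lia. reflexivity.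
  - intros m Hm.
    destruct (Nat.ltb_spec (S (n + m)) K), (Nat.ltb_spec (S (n + m)) (S K)),
      (Nat.eqb_spec m (K - S n)); try lia; ring.
Qed.

Definition conv_coef (beta : R) (Y0 Y1 : list C) (n m : nat) : C :=
  RtoC ((- beta) ^ (n + m + 1) / INR (fact (n + m + 1)))
  * (hcoef Y0 (S n) * hcoef Y1 (S m)).

Lemma is_RInt_taylor_term beta Y0 Y1 n m :
  is_RInt (V := CV)
    (fun tau => RtoC ((- tau) ^ m / INR (fact m)) * hcoef Y1 (S m)
                * (RtoC ((- (beta - tau)) ^ n / INR (fact n)) * hcoef Y0 (S n)))
    0 beta (- conv_coef beta Y0 Y1 n m).
Proof.
  set (c := hcoef Y0 (S n) * hcoef Y1 (S m)).
  apply (is_RInt_C_ext (fun tau => RtoC ((-1) ^ (n + m)) * c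
           * RtoC (tau ^ m / INR (fact m) * ((beta - tau) ^ n / INR (fact n))))).
  { intros tau. unfold c.
    replace (- tau)%R with (-1 * tau)%R by ring.
    replace (- (beta - tau))%R with (-1 * (beta - tau))%R by ring.
    rewrite !Rpow_mult_distr, pow_add. unfold Rdiv. rewrite !RtoC_mult. ring. }
  eapply is_RInt_C_eq_value; [apply is_RInt_Cmult_l, is_RInt_RtoC, is_RInt_beta |].
  unfold conv_coef; fold c.
  replace (m + n + 1)%nat with (S (n + m)) by lia. replace (n + m + 1)%nat with (S (n + m)) by lia.
  replace (- beta)%R with (-1 * beta)%R by ring.
  rewrite Rpow_mult_distr. unfold Rdiv. rewrite !RtoC_mult. simpl pow. rewrite !RtoC_mult.
  ring.
Qed.

Lemma is_RInt_taylor_product beta Y0 Y1 N :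
  is_RInt (V := CV)
    (fun tau => expdd_taylor N (- tau) Y1 * expdd_taylor N (- (beta - tau)) Y0) 0 beta
    (csum2 N (fun n m => - conv_coef beta Y0 Y1 n m)).
Proof.
  apply (is_RInt_C_ext (fun tau => csum2 N (fun n m =>
           RtoC ((- tau) ^ m / INR (fact m)) * hcoef Y1 (S m)
           * (RtoC ((- (beta - tau)) ^ n / INR (fact n)) * hcoef Y0 (S n))))).
  { intros tau. unfold csum2, expdd_taylor. symmetry.
    rewrite <- csum_mult_l. apply csum_ext; intros n _. rewrite <- csum_mult_r. reflexivity. }
  apply (is_RInt_csum (fun n tau => csum _ N)); intros n.
  apply (is_RInt_csum (fun m tau => _)); intros m.
  apply is_RInt_taylor_term.
Qed.

Lemma expdd_taylor_app beta Y0 Y1 N : Y0 <> nil -> Y1 <> nil ->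
  expdd_taylor N (- beta) (Y0 ++ Y1)
  = csum2 N (fun n m => if Nat.ltb (S (n + m)) N then conv_coef beta Y0 Y1 n m else 0).
Proof.
  intros H0 H1. rewrite <- csum_triangle_square. unfold expdd_taylor.
  apply csum_ext; intros k _.
  rewrite hcoef_app_S, <- csum_mult_l by auto. apply csum_ext; intros n Hn.
  unfold conv_coef. replace (n + (k - S n) + 1)%nat with k by lia. ring.
Qed.

(** * Error bounds *)

Lemma is_lim_seq_pow_fact X : is_lim_seq (fun n => X ^ n / INR (fact n))%R 0.
Proof. apply is_lim_seq_Reals, cv_speed_pow_fact. Qed.

Lemma pow_fact_antitone X N k : (0 <= X)%R -> (X <= INR N)%R -> (N <= k)%nat ->
  (X ^ k / INR (fact k) <= X ^ N / INR (fact N))%R.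
Proof.
  intros HX HN. induction 1 as [|k Hk IH]; [lra |].
  eapply Rle_trans; [| apply IH].
  pose proof (INR_fact_pos k). pose proof (pow_le X k HX).
  assert (HXk : (X <= INR (S k))%R) by (rewrite S_INR; apply le_INR in Hk; lra).
  pose proof (lt_0_INR (S k) ltac:(lia)).
  rewrite fact_simpl, mult_INR. simpl pow.
  unfold Rdiv. rewrite Rinv_mult.
  replace (X * X ^ k * (/ INR (S k) * / INR (fact k)))%R
    with (X ^ k * / INR (fact k) * (X / INR (S k)))%R by (field; lra).
  rewrite <- (Rmult_1_r (X ^ k * / INR (fact k))) at 2.
  apply Rmult_le_compat_l.
  - apply Rmult_le_pos; [lra | left; apply Rinv_0_lt_compat; lra].
  - apply Rmult_le_reg_r with (INR (S k)); [lra |]. unfold Rdiv.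
    rewrite Rmult_assoc, Rinv_l; lra.
Qed.

Lemma INR_sqr_le_pow4 N : (INR N * INR N <= 4 ^ N)%R.
Proof.
  assert (H2 : forall n, (INR n <= 2 ^ n)%R).
  { induction n; [simpl; lra |].
    rewrite S_INR; simpl. pose proof (pow_R1_Rle 2 n ltac:(lra)). lra. }
  replace 4%R with (2 * 2)%R by ring. rewrite Rpow_mult_distr.
  apply Rmult_le_compat; auto; apply pos_INR.
Qed.

Definition dd_bound (beta : R) (Y : list C) : R :=
  exp (beta * dd_radius Y) * (dd_radius Y / dist_prod (dd_radius Y) Y).

Definition taylor_err (beta : R) (Y : list C) (N : nat) : R :=
  (beta * dd_radius Y) ^ N / INR (fact N) * dd_bound beta Y.

Lemma dd_bound_pos beta Y : (0 < dd_bound beta Y)%R.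
Proof.
  apply Rmult_lt_0_compat; [apply exp_pos |].
  apply Rdiv_lt_0_compat; [apply dd_radius_pos | apply dist_prod_dd_radius_pos].
Qed.

Lemma is_lim_seq_taylor_err beta Y : is_lim_seq (taylor_err beta Y) 0.
Proof.
  replace (Finite 0) with (Rbar_mult 0 (dd_bound beta Y)) by (simpl; f_equal; ring).
  apply is_lim_seq_scal_r, is_lim_seq_pow_fact.
Qed.

Lemma taylor_err_nonneg beta Y N : (0 <= beta)%R -> (0 <= taylor_err beta Y N)%R.
Proof.
  intros Hb. pose proof (dd_radius_pos Y). pose proof (dd_bound_pos beta Y).
  pose proof (INR_fact_pos N). unfold taylor_err.
  apply Rmult_le_pos; [apply Rdiv_le_0_compat; [apply pow_le; nra | lra] | lra].
Qed.

Lemma Cmod_expdd_sub_taylor_unif t beta Y N : (Rabs t <= beta)%R ->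
  (Cmod (expdd t Y - expdd_taylor N t Y) <= taylor_err beta Y N)%R.
Proof.
  intros Ht. pose proof (dd_radius_pos Y). pose proof (Rabs_pos t).
  eapply Rle_trans; [apply Cmod_expdd_sub_taylor_le |].
  unfold taylor_err, dd_bound. rewrite <- Rmult_assoc.
  apply Rmult_le_compat_r;
    [left; apply Rdiv_lt_0_compat; [lra | apply dist_prod_dd_radius_pos] |].
  unfold Rdiv. rewrite !(Rmult_comm _ (/ INR (fact N))), !Rmult_assoc.
  apply Rmult_le_compat_l; [left; apply Rinv_0_lt_compat, INR_fact_pos |].
  apply Rmult_le_compat.
  - apply pow_le. nra.
  - left; apply exp_pos.
  - apply pow_incr. split; [nra | apply Rmult_le_compat_r; lra].
  - apply exp_le_compat, Rmult_le_compat_r; lra.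
Qed.

Lemma Cmod_expdd_unif t beta Y : (Rabs t <= beta)%R -> (Cmod (expdd t Y) <= dd_bound beta Y)%R.
Proof.
  intros Ht. pose proof (dd_radius_pos Y). pose proof (Rabs_pos t).
  eapply Rle_trans; [apply Cmod_expdd_le |]. unfold dd_bound.
  apply Rmult_le_compat_r;
    [left; apply Rdiv_lt_0_compat; [lra | apply dist_prod_dd_radius_pos] |].
  apply exp_le_compat, Rmult_le_compat_r; lra.
Qed.

Lemma Cmod_mult_sub_le (a b a' b' : C) :
  (Cmod (a * b - a' * b') <= Cmod (a - a') * Cmod b + (Cmod a + Cmod (a - a')) * Cmod (b - b'))%R.
Proof.
  replace (a * b - a' * b') with ((a - a') * b + a' * (b - b')) by ring.
  eapply Rle_trans; [apply Cmod_triangle |]. rewrite !Cmod_mult.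
  apply Rplus_le_compat_l, Rmult_le_compat_r; [apply Cmod_ge_0 |].
  replace a' with (a - (a - a')) at 1 by ring.
  eapply Rle_trans; [apply Cmod_triangle |]. rewrite Cmod_opp. lra.
Qed.

Definition conv_bound (Y0 Y1 : list C) : R :=
  (dd_radius Y0 + dd_radius Y1) / (dist_prod (dd_radius Y0) Y0 * dist_prod (dd_radius Y1) Y1).

Lemma conv_bound_pos Y0 Y1 : (0 < conv_bound Y0 Y1)%R.
Proof.
  pose proof (dd_radius_pos Y0). pose proof (dd_radius_pos Y1).
  pose proof (dist_prod_dd_radius_pos Y0). pose proof (dist_prod_dd_radius_pos Y1).
  apply Rdiv_lt_0_compat; [lra | apply Rmult_lt_0_compat; auto].
Qed.

Lemma Cmod_conv_coef_le beta Y0 Y1 n m : (0 <= beta)%R ->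
  (Cmod (conv_coef beta Y0 Y1 n m) <=
   (beta * (dd_radius Y0 + dd_radius Y1)) ^ (n + m + 1) / INR (fact (n + m + 1))
   * conv_bound Y0 Y1)%R.
Proof.
  intros Hb. unfold conv_coef, conv_bound.
  pose proof (dd_radius_pos Y0). pose proof (dd_radius_pos Y1).
  pose proof (dist_prod_dd_radius_pos Y0). pose proof (dist_prod_dd_radius_pos Y1).
  pose proof (INR_fact_pos (n + m + 1)).
  pose proof (Cmod_hcoef_le Y0 (S n)) as B0. pose proof (Cmod_hcoef_le Y1 (S m)) as B1.
  set (r0 := dd_radius Y0) in *. set (r1 := dd_radius Y1) in *.
  rewrite !Cmod_mult, Cmod_R, Rabs_div, <- RPow_abs, Rabs_Ropp, (Rabs_right beta),
    (Rabs_right (INR _)) by lra.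
  assert (HB : (Cmod (hcoef Y0 (S n)) * Cmod (hcoef Y1 (S m))
                <= (r0 + r1) ^ S n * (r0 + r1) ^ S m
                   / (dist_prod r0 Y0 * dist_prod r1 Y1))%R).
  { unfold Rdiv. rewrite Rinv_mult.
    replace ((r0 + r1) ^ S n * (r0 + r1) ^ S m * (/ dist_prod r0 Y0 * / dist_prod r1 Y1))%R
      with ((r0 + r1) ^ S n / dist_prod r0 Y0 * ((r0 + r1) ^ S m / dist_prod r1 Y1))%R
      by (unfold Rdiv; ring).
    apply Rmult_le_compat; try apply Cmod_ge_0.
    - eapply Rle_trans; [apply B0 |].
      apply Rmult_le_compat_r; [left; apply Rinv_0_lt_compat; lra |].
      apply pow_incr; lra.
    - eapply Rle_trans; [apply B1 |].
      apply Rmult_le_compat_r; [left; apply Rinv_0_lt_compat; lra |].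
      apply pow_incr; lra. }
  replace ((r0 + r1) ^ S n * (r0 + r1) ^ S m)%R with ((r0 + r1) * (r0 + r1) ^ (n + m + 1))%R
    in HB by (rewrite <- pow_add; replace (S n + S m)%nat with (S (n + m + 1)) by lia; reflexivity).
  rewrite Rpow_mult_distr.
  replace (beta ^ (n + m + 1) * (r0 + r1) ^ (n + m + 1) / INR (fact (n + m + 1))
             * ((r0 + r1) / (dist_prod r0 Y0 * dist_prod r1 Y1)))%R
    with (beta ^ (n + m + 1) / INR (fact (n + m + 1))
             * ((r0 + r1) * (r0 + r1) ^ (n + m + 1) / (dist_prod r0 Y0 * dist_prod r1 Y1)))%R
    by (field; repeat split; lra).
  apply Rmult_le_compat_l; auto.
  apply Rmult_le_pos; [apply pow_le; lra | left; apply Rinv_0_lt_compat; lra].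
Qed.

(* Only the terms with [n + m + 1 >= N] survive, and there are at most [N ^ 2] of them. *)
Lemma Cmod_expdd_taylor_app_sub_le beta Y0 Y1 N : (0 <= beta)%R -> Y0 <> nil -> Y1 <> nil ->
  (beta * (dd_radius Y0 + dd_radius Y1) <= INR N)%R ->
  (Cmod (expdd_taylor N (- beta) (Y0 ++ Y1) + csum2 N (fun n m => - conv_coef beta Y0 Y1 n m)%C)
   <=
   (4 * (beta * (dd_radius Y0 + dd_radius Y1))) ^ N / INR (fact N) * conv_bound Y0 Y1)%R.
Proof.
  intros Hb H0 H1 HN. set (X := (beta * (dd_radius Y0 + dd_radius Y1))%R) in *.
  assert (HX : (0 <= X)%R) by (pose proof (dd_radius_pos Y0); pose proof (dd_radius_pos Y1);
                               unfold X; nra).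
  pose proof (conv_bound_pos Y0 Y1) as HC.
  pose proof (INR_fact_pos N).
  rewrite expdd_taylor_app, csum2_plus by auto.
  eapply Rle_trans.
  { apply (Cmod_csum2_le N _ (X ^ N / INR (fact N) * conv_bound Y0 Y1)).
    intros n m _ _. destruct (Nat.ltb_spec (S (n + m)) N).
    - replace (conv_coef beta Y0 Y1 n m + - conv_coef beta Y0 Y1 n m) with (RtoC 0) by ring.
      rewrite Cmod_0. apply Rmult_le_pos; [| lra].
      apply Rmult_le_pos; [apply pow_le; auto | left; apply Rinv_0_lt_compat; auto].
    - rewrite Cplus_0_l, Cmod_opp.
      eapply Rle_trans; [apply Cmod_conv_coef_le; auto |].
      apply Rmult_le_compat_r; [lra |]. apply pow_fact_antitone; auto. lia. }
  rewrite Rpow_mult_distr.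
  pose proof (INR_sqr_le_pow4 N).
  assert (0 <= X ^ N / INR (fact N) * conv_bound Y0 Y1)%R
    by (apply Rmult_le_pos; [apply Rdiv_le_0_compat; [apply pow_le |] |]; lra).
  unfold Rdiv in *. nra.
Qed.

Lemma ball_C_Cmod (x y : C) (eps : R) : (Cmod (y - x) < eps)%R -> @ball CV x eps y.
Proof. intros H. apply (norm_compat1 (K := R_AbsRing) (V := CV)). rewrite norm_C. exact H. Qed.

(* Clamping the approximants to [[a, b]] makes the approximation uniform on all of [R],
   as [filterlim_RInt] requires. *)
Lemma is_RInt_uniform_limit (f : R -> C) (fN : nat -> R -> C) (IN : nat -> C) a b (V : C)
    (e : nat -> R) : (a < b)%R ->
  (forall N, is_RInt (V := CV) (fN N) a b (IN N)) -> is_lim_seq e 0 ->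
  eventually (fun N => (forall t, (a <= t <= b)%R -> (Cmod (f t - fN N t) <= e N)%R)
                       /\ (Cmod (IN N - V) <= e N)%R) ->
  is_RInt (V := CV) f a b V.
Proof.
  intros Hab HI He Hbound.
  assert (Happ : forall eps : posreal, eventually (fun N =>
            (forall t, (a <= t <= b)%R -> (Cmod (f t - fN N t) < eps)%R)
            /\ (Cmod (IN N - V) < eps)%R)).
  { intros eps. apply is_lim_seq_spec in He.
    destruct (filter_and _ _ (He eps) Hbound) as [N0 HN0]. exists N0. intros N HN.
    destruct (HN0 N HN) as [Hlt [Hf HV]]. rewrite Rminus_0_r in Hlt.
    pose proof (Rle_abs (e N)). split; [intros t Ht; specialize (Hf t Ht) |]; lra. }
  set (c := fun t => Rmax a (Rmin b t)).
  assert (Hc : forall t, (a <= c t <= b)%R).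
  { intros t; unfold c; split; [apply Rmax_l | apply Rmax_lub; [lra | apply Rmin_l]]. }
  assert (Hc2 : forall t, (Rmin a b < t < Rmax a b)%R -> c t = t).
  { intros t Ht. rewrite Rmin_left, Rmax_right in Ht by lra. unfold c.
    rewrite Rmin_right, Rmax_right by lra. auto. }
  set (g := fun t => f (c t)). set (gN := fun N t => fN N (c t)).
  assert (HIg : forall N, is_RInt (V := CV) (gN N) a b (IN N)).
  { intros N. apply (is_RInt_ext (V := CV) (fN N)); auto.
    intros t Ht. unfold gN. rewrite Hc2; auto. }
  assert (Hg : filterlim gN eventually (@locally (fct_UniformSpace R CV) g)).
  { apply (filterlim_locally (F := eventually) (U := fct_UniformSpace R CV)). intros eps.
    destruct (Happ eps) as [N0 HN0]. exists N0. intros N HN t. apply ball_C_Cmod.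
    destruct (HN0 N HN) as [Hf _]. specialize (Hf (c t) (Hc t)).
    unfold gN, g. rewrite <- Cmod_opp.
    replace (- (fN N (c t) - f (c t))) with (f (c t) - fN N (c t)) by ring. exact Hf. }
  destruct (@filterlim_RInt nat CV gN a b eventually eventually_filter g IN HIg Hg)
    as [If [Hlim HIf]]. change C in If.
  replace V with If.
  - apply (is_RInt_ext (V := CV) g); auto. intros t Ht. unfold g. rewrite Hc2; auto.
  - apply (filterlim_locally_unique (K := R_AbsRing) (V := CV) (F := eventually) IN); auto.
    apply (filterlim_locally (F := eventually) (U := CV)). intros eps.
    destruct (Happ eps) as [N0 HN0]. exists N0. intros N HN. apply ball_C_Cmod.
    apply HN0; auto.
Qed.

(** * The convolution identity *)

Definition prod_err (beta : R) (Y0 Y1 : list C) (N : nat) : R :=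
  taylor_err beta Y1 N * dd_bound beta Y0
  + (dd_bound beta Y1 + taylor_err beta Y1 N) * taylor_err beta Y0 N.

Definition sum_err (beta : R) (Y0 Y1 : list C) (N : nat) : R :=
  (4 * (beta * (dd_radius Y0 + dd_radius Y1))) ^ N / INR (fact N) * conv_bound Y0 Y1
  + taylor_err beta (Y0 ++ Y1) N.

Lemma Cmod_expdd_prod_sub_taylor_le beta Y0 Y1 N tau : (0 <= tau <= beta)%R ->
  (Cmod (expdd (- tau) Y1 * expdd (- (beta - tau)) Y0
         - expdd_taylor N (- tau) Y1 * expdd_taylor N (- (beta - tau)) Y0)
   <= prod_err beta Y0 Y1 N)%R.
Proof.
  intros Htau.
  assert (H1 : (Rabs (- tau) <= beta)%R) by (rewrite Rabs_Ropp, Rabs_right; lra).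
  assert (H0 : (Rabs (- (beta - tau)) <= beta)%R) by (rewrite Rabs_Ropp, Rabs_right; lra).
  eapply Rle_trans; [apply Cmod_mult_sub_le |]. unfold prod_err.
  pose proof (Cmod_expdd_sub_taylor_unif _ _ Y1 N H1).
  pose proof (Cmod_expdd_sub_taylor_unif _ _ Y0 N H0).
  pose proof (Cmod_expdd_unif _ _ Y1 H1). pose proof (Cmod_expdd_unif _ _ Y0 H0).
  apply Rplus_le_compat; apply Rmult_le_compat; auto using Cmod_ge_0, Rplus_le_compat.
  apply Rplus_le_le_0_compat; apply Cmod_ge_0.
Qed.

Lemma Cmod_csum2_conv_coef_add_expdd_le beta Y0 Y1 N : (0 <= beta)%R ->
  Y0 <> nil -> Y1 <> nil -> (beta * (dd_radius Y0 + dd_radius Y1) <= INR N)%R ->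
  (Cmod (csum2 N (fun n m => - conv_coef beta Y0 Y1 n m)%C + expdd (- beta) (Y0 ++ Y1))
   <= sum_err beta Y0 Y1 N)%R.
Proof.
  intros Hb H0 H1 HN.
  replace (csum2 N _ + expdd (- beta) (Y0 ++ Y1))
    with ((expdd_taylor N (- beta) (Y0 ++ Y1) + csum2 N (fun n m => - conv_coef beta Y0 Y1 n m))
          + (expdd (- beta) (Y0 ++ Y1) - expdd_taylor N (- beta) (Y0 ++ Y1))) by ring.
  eapply Rle_trans; [apply Cmod_triangle |].
  apply Rplus_le_compat; [apply Cmod_expdd_taylor_app_sub_le; auto |].
  apply Cmod_expdd_sub_taylor_unif. rewrite Rabs_Ropp, Rabs_right; lra.
Qed.

Lemma is_lim_seq_conv_err beta Y0 Y1 :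
  is_lim_seq (fun N => prod_err beta Y0 Y1 N + sum_err beta Y0 Y1 N)%R 0.
Proof.
  pose proof (is_lim_seq_taylor_err beta Y0). pose proof (is_lim_seq_taylor_err beta Y1).
  pose proof (is_lim_seq_taylor_err beta (Y0 ++ Y1)).
  pose proof (is_lim_seq_pow_fact (4 * (beta * (dd_radius Y0 + dd_radius Y1)))).
  replace (Finite 0) with (Finite (0 * dd_bound beta Y0 + (dd_bound beta Y1 + 0) * 0
                                   + (0 * conv_bound Y0 Y1 + 0))) by (f_equal; ring).
  unfold prod_err, sum_err.
  repeat first [apply is_lim_seq_plus' | apply is_lim_seq_mult' | apply is_lim_seq_const]; auto.
Qed.

Lemma eventually_conv_err beta Y0 Y1 : (0 < beta)%R -> Y0 <> nil -> Y1 <> nil ->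
  eventually (fun N =>
    (forall tau, (0 <= tau <= beta)%R ->
       (Cmod (expdd (- tau) Y1 * expdd (- (beta - tau)) Y0
              - expdd_taylor N (- tau) Y1 * expdd_taylor N (- (beta - tau)) Y0)
        <= prod_err beta Y0 Y1 N + sum_err beta Y0 Y1 N)%R)
    /\ (Cmod (csum2 N (fun n m => - conv_coef beta Y0 Y1 n m)%C - - expdd (- beta) (Y0 ++ Y1))
        <= prod_err beta Y0 Y1 N + sum_err beta Y0 Y1 N)%R).
Proof.
  intros Hb H0 H1.
  destruct (proj2 (is_lim_seq_spec INR p_infty) is_lim_seq_INR
              (beta * (dd_radius Y0 + dd_radius Y1))%R) as [N0 HN0].
  exists N0. intros N HN. specialize (HN0 N HN).
  pose proof (dd_radius_pos Y0). pose proof (dd_radius_pos Y1).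
  pose proof (dd_bound_pos beta Y0). pose proof (dd_bound_pos beta Y1).
  pose proof (taylor_err_nonneg beta Y0 N ltac:(lra)).
  pose proof (taylor_err_nonneg beta Y1 N ltac:(lra)).
  pose proof (taylor_err_nonneg beta (Y0 ++ Y1) N ltac:(lra)).
  pose proof (conv_bound_pos Y0 Y1). pose proof (INR_fact_pos N).
  assert (0 <= (4 * (beta * (dd_radius Y0 + dd_radius Y1))) ^ N / INR (fact N))%R
    by (apply Rdiv_le_0_compat; [apply pow_le; nra | lra]).
  assert (Hprod : (0 <= prod_err beta Y0 Y1 N)%R) by (unfold prod_err; nra).
  assert (Hsum : (0 <= sum_err beta Y0 Y1 N)%R) by (unfold sum_err; nra).
  split.
  - intros tau Htau. pose proof (Cmod_expdd_prod_sub_taylor_le beta Y0 Y1 N tau Htau). lra.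
  - replace (csum2 N _ - - expdd (- beta) (Y0 ++ Y1))
      with (csum2 N (fun n m => - conv_coef beta Y0 Y1 n m) + expdd (- beta) (Y0 ++ Y1))
      by ring.
    pose proof (Cmod_csum2_conv_coef_add_expdd_le beta Y0 Y1 N ltac:(lra) H0 H1 ltac:(lra)).
    lra.
Qed.

Lemma nodes_app (x : nat -> C) q j : (j <= q - 1)%nat -> (1 <= q)%nat ->
  nodes x 0 q = nodes x 0 j ++ nodes x (S j) q.
Proof.
  intros Hj Hq. unfold nodes. rewrite <- map_app. f_equal.
  replace (S q - 0)%nat with (S j + (S q - S j))%nat by lia. apply seq_app.
Qed.

Lemma nodes_neq_nil (x : nat -> C) a b : (a <= b)%nat -> nodes x a b <> nil.
Proof. intros H. unfold nodes. replace (S b - a)%nat with (S (b - a)) by lia. discriminate. Qed.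

Theorem lemma1 (x : nat -> C) (q j : nat) (beta : R) :
  (1 <= q)%nat -> (j <= q - 1)%nat -> 0 < beta ->
  is_RInt (V := C_R_CompleteNormedModule)
    (fun tau => Cmult (expdd (- tau) (nodes x (S j) q))
                      (expdd (- (beta - tau)) (nodes x 0 j)))
    0 beta
    (Copp (expdd (- beta) (nodes x 0 q))).
Proof.
  intros Hq Hj Hb. rewrite (nodes_app x q j Hj Hq).
  set (Y0 := nodes x 0 j). set (Y1 := nodes x (S j) q).
  assert (H0 : Y0 <> nil) by (apply nodes_neq_nil; lia).
  assert (H1 : Y1 <> nil) by (apply nodes_neq_nil; lia).
  apply (is_RInt_uniform_limit _
    (fun N tau => expdd_taylor N (- tau) Y1 * expdd_taylor N (- (beta - tau)) Y0)
    (fun N => csum2 N (fun n m => - conv_coef beta Y0 Y1 n m))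
    _ _ _ (fun N => prod_err beta Y0 Y1 N + sum_err beta Y0 Y1 N)%R Hb).
  - intros N. apply is_RInt_taylor_product.
  - apply is_lim_seq_conv_err.
  - apply eventually_conv_err; auto.
Qed.
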